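(* For each $C>0$ there is an irrational number $x=[a_0,a_1,a_2,\ldots]$ with all $a_i\in\{1,2,3,4\}$ whose sequence of partial quotients is eventually periodic with period length at least $C$, and whose Jacobi sequence is the constant sequence $1,1,1,\ldots$. Furthermore, there are uncountably many irrational numbers $x=[a_0,a_1,a_2,\ldots]$ with all $a_i\in\{1,2,3,4\}$ whose continued fraction expansion is not eventually periodic and whose Jacobi sequence is the constant sequence $1,1,1,\ldots$.
   Context: For $x\in\mathbb{R}\setminus\mathbb{Q}$ with regular continued fraction expansion $x=[a_0,a_1,a_2,\ldots]$, the convergents $s_k/t_k$ are defined by $s_{-1}=1$, $s_0=a_0$, $s_k=a_ks_{k-1}+s_{k-2}$ and $t_{-1}=0$, $t_0=1$, $t_k=a_kt_{k-1}+t_{k-2}$ for $k\ge1$. For an odd natural number $n$ and an integer $m$ coprime to $n$, $\left(\frac{m}{n}\right)$ is the usual Jacobi symbol; if $n$ is even and $\gcd(m,n)=1$, one sets $\left(\frac{m}{n}\right)=*$, a fixed symbol different from $\pm1$. The Jacobi sequence of $x$ is $\left(\frac{s_k}{t_k}\right)$, $k\ge 0$. An irrational number whose partial quotients all lie in $\{1,2,3,4\}$ is called a 4-representative. *)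

From HB Require Import structures.
From mathcomp Require Import all_boot all_order all_algebra.
From mathcomp Require Import all_classical all_reals all_analysis.
Set Implicit Arguments. Unset Strict Implicit. Unset Printing Implicit Defensive.
Import Order.TTheory GRing.Theory Num.Theory numFieldNormedType.Exports.
Local Open Scope classical_set_scope.
Local Open Scope ring_scope.

(* Convergents of the regular continued fraction [a 0; a 1; a 2; ...].
   cf_num a k = s_k, cf_den a k = t_k.  We compute the pair (s_{k-1}, s_k)
   (resp. (t_{k-1}, t_k)) by recursion, with s_{-1} = 1, s_0 = a 0,
   t_{-1} = 0, t_0 = 1. *)
Fixpoint cf_pair (a : nat -> nat) (init : nat * nat) (k : nat) : nat * nat :=
  match k with
  | 0 => init
  | k'.+1 => let p := cf_pair a init k' in (p.2, a k'.+1 * p.2 + p.1)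
  end.

Definition cf_num (a : nat -> nat) (k : nat) : nat := (cf_pair a (1, a 0) k).2.
Definition cf_den (a : nat -> nat) (k : nat) : nat := (cf_pair a (0, 1) k).2.

Definition cf_expansion {R : realType} (x : R) (a : nat -> nat) : Prop :=
  (forall i, (0 < i)%N -> (0 < a i)%N) /\
  ((fun k => (cf_num a k)%:R / (cf_den a k)%:R : R) @ \oo --> x).

Definition legendre (m p : nat) : int :=
  if dvdn p m then 0
  else if [exists y : 'I_p, modn (muln y y) p == modn m p] then 1 else -1.

(* The value of the (extended) Jacobi symbol: either an integer, or the
   special symbol * (used when the denominator is even). *)
Inductive jsym := JInt of int | JStar.

Definition jacobi (m n : nat) : jsym :=
  if odd n then JInt (\prod_(p <- primes n) legendre m p ^+ logn p n)%R
  else JStar.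

Definition jacobi_seq (a : nat -> nat) (k : nat) : jsym :=
  jacobi (cf_num a k) (cf_den a k).

Definition eventually_periodic_with (a : nat -> nat) (p : nat) : Prop :=
  exists N, forall n, (N <= n)%N -> a (n + p) = a n.

Definition eventually_periodic (a : nat -> nat) : Prop :=
  exists p, (0 < p)%N /\ eventually_periodic_with a p.

Definition period_length (a : nat -> nat) (p : nat) : Prop :=
  (0 < p)%N /\ eventually_periodic_with a p /\
  forall q, (0 < q)%N -> eventually_periodic_with a q -> (p <= q)%N.

Definition four_digits (a : nat -> nat) : Prop :=
  forall i, (1 <= a i <= 4)%N.

From mathcomp Require Import all_boot all_order all_algebra all_field.
From mathcomp Require Import all_classical all_reals all_analysis.
From mathcomp Require Import zify ring lra.
Import Order.TTheory GRing.Theory Num.Theory numFieldNormedType.Exports.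
Set Implicit Arguments. Unset Strict Implicit. Unset Printing Implicit Defensive.

(* The numbers are [x_c = [1; 1, 4, d_0, 4, d_1, 4, ...]] with [d_j] in {2, 4}
   read off a bit sequence [c].  Every partial quotient from index 2 on is even,
   so every denominator [t_k] is odd and [t_k = 1 (mod 4)] for even [k].  As one
   of [t_(k+1)], [t_(k+2)] is [1 (mod 4)], Jacobi reciprocity and
   [t_(k+2) = t_k (mod t_(k+1))] give
   [(t_(k+1)/t_(k+2)) = (t_k/t_(k+1)) = ... = (t_0/t_1) = 1]; then
   [s_k t_(k-1) = (-1)^(k-1) (mod t_k)], where [t_k = 1 (mod 4)] whenever the
   sign is [-1], yields [(s_k/t_k) = 1].
   Setting [d_j = 2] exactly when [m+1] divides [j] gives minimal period
   [2(m+1)].  Letting the odd-indexed bits record which [j] are squares makes the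
   expansion aperiodic while the even-indexed bits stay free; since distinct bit
   sequences give distinct numbers, there are uncountably many such [x_c]. *)

(** * Quadratic reciprocity *)
Lemma odd_halfK n : odd n -> (n./2).*2.+1 = n.
Proof. by move=> on; rewrite -[RHS]odd_double_half on. Qed.

Section QuadraticResidues.
Variable p : nat.
Hypotheses (p_prime : prime p) (p_odd : odd p).
Local Notation F := 'F_p.
Local Open Scope ring_scope.

Let p_half : (p./2).*2.+1 = p. Proof. exact: odd_halfK. Qed.
Let half_gt0 : (0 < p./2)%N.
Proof. by have := prime_gt1 p_prime; rewrite -p_half; case: (p./2). Qed.

Lemma Fp_nat_eq (a b : nat) : ((a%:R : F) == b%:R) = (a == b %[mod p]).
Proof.
apply/eqP/eqP => [e|e]; first by rewrite -(val_Fp_nat p_prime a) e val_Fp_nat.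
by rewrite -(Fp_nat_mod p_prime a) e Fp_nat_mod.
Qed.

Lemma Fp_nat_eq0 (a : nat) : ((a%:R : F) == 0) = (p %| a)%N.
Proof. by rewrite -[0 : F]/(0%:R) Fp_nat_eq mod0n. Qed.

Lemma Fp_fermat (x : F) : x != 0 -> x ^+ p.-1 = 1.
Proof.
move=> x0; have xp := expf_card x; rewrite card_Fp // in xp.
have : x * x ^+ p.-1 = x * 1 by rewrite -exprS prednK ?prime_gt0 // mulr1.
exact: mulfI.
Qed.

Lemma Fp_euler_sign (x : F) : x != 0 -> x ^+ p./2 = 1 \/ x ^+ p./2 = -1.
Proof.
move=> x0; have : (x ^+ p./2) ^+ 2 == 1.
  by rewrite -exprM muln2 -[(p./2).*2]/(p./2).*2.+1.-1 p_half Fp_fermat.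
by rewrite sqrf_eq1 => /orP[/eqP->|/eqP->]; [left|right].
Qed.

Lemma Fp_one_neq_opp1 : (1 : F) != -1.
Proof.
rewrite -subr_eq0 opprK -[_ + 1]/(2%:R : F) Fp_nat_eq0.
apply/negP => /(dvdn_leq (isT : (0 < 2)%N)); have := prime_gt1 p_prime.
by case: p p_odd => [|[|[|]]].
Qed.

Lemma Fp_sqr_nat_inj (i j : nat) : (0 < i <= p./2)%N -> (0 < j <= p./2)%N ->
  (i%:R : F) ^+ 2 = j%:R ^+ 2 -> i = j.
Proof.
move=> hi hj /eqP; rewrite -subr_eq0 subr_sqr mulf_eq0 -natrD => /orP[].
  by rewrite subr_eq0 Fp_nat_eq !modn_small => [/eqP||]; lia.
by rewrite Fp_nat_eq0 => /dvdn_leq; lia.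
Qed.

(* The [p./2] squares of [1, ..., p./2] are distinct roots of ['X^(p./2) - 1];
   a non-square root would be one root too many. *)
Lemma Fp_euler_criterion (x : F) :
  x != 0 -> (exists y : F, y ^+ 2 = x) <-> x ^+ p./2 = 1.
Proof.
move=> x0; split=> [[y yx]|x_half].
  rewrite -yx -exprM mul2n -[(p./2).*2]/(p./2).*2.+1.-1 p_half Fp_fermat //.
  by apply: contra x0 => /eqP y0; rewrite -yx y0 expr0n.
apply/not_existsP => nsq.
pose sqrs := [seq (i%:R : F) ^+ 2 | i <- iota 1 p./2].
have Xn1_neq0 : ('X^(p./2) - 1%:P : {poly F}) != 0.
  by rewrite -size_poly_eq0 size_XnsubC.
have := max_poly_roots Xn1_neq0 (rs := x :: sqrs).
rewrite size_XnsubC //= size_map size_iota ltnn /= rootE !hornerE x_half subrr eqxx.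
move=> max_roots.
have all_roots : all (root ('X^(p./2) - 1%:P)) sqrs.
  apply/allP => _ /mapP[i hi ->]; rewrite rootE !hornerE -exprM mul2n.
  rewrite -[(p./2).*2]/(p./2).*2.+1.-1 p_half Fp_fermat ?subrr //.
  by rewrite Fp_nat_eq0; apply/negP => /dvdn_leq; move: hi; rewrite mem_iota; lia.
have uniq_rs : (x \notin sqrs) && uniq sqrs.
  rewrite map_inj_in_uniq ?iota_uniq ?andbT.
    by apply/negP => /mapP[i _ sq]; apply: (nsq i%:R).
  by move=> i j; rewrite !mem_iota => hi hj; apply: Fp_sqr_nat_inj; lia.
by have := max_roots all_roots uniq_rs.
Qed.

Lemma Fp_intr_sign_inj (u v : int) : (u = 1 \/ u = -1) -> (v = 1 \/ v = -1) ->
  (u%:~R : F) = v%:~R -> u = v.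
Proof.
move=> [] -> [] -> //; rewrite ?rmorphN1 ?rmorph1 => /eqP e;
  by move: Fp_one_neq_opp1; rewrite ?e // eq_sym e.
Qed.

Lemma legendre_mod (m : nat) : legendre (m %% p) p = legendre m p.
Proof. by rewrite /legendre /dvdn !modn_mod. Qed.

Lemma legendre_sign (m : nat) : ~~ (p %| m)%N ->
  legendre m p = 1 \/ legendre m p = -1.
Proof. by rewrite /legendre => /negbTE ->; case: ifP; [left|right]. Qed.

Lemma legendre_Fp (m : nat) : ~~ (p %| m)%N ->
  ((legendre m p)%:~R : F) = (m%:R : F) ^+ p./2.
Proof.
move=> pNm; have m_neq0 : (m%:R : F) != 0 by rewrite Fp_nat_eq0.
rewrite /legendre (negbTE pNm); case: ifP => [/existsP[y /eqP sq_y]|nsq].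
  apply/esym/(Fp_euler_criterion m_neq0); exists y%:R.
  by rewrite -natrX; apply/eqP; rewrite Fp_nat_eq -mulnn sq_y.
have {}nsq : ~ exists z : F, z ^+ 2 = m%:R.
  move=> [z sq_z]; move/negbT/negP: nsq; apply; apply/existsP.
  have zp : (val z < p)%N by have := ltn_ord z; rewrite [X in (_ < X)%N -> _]Fp_cast.
  exists (Ordinal zp); rewrite /= -Fp_nat_eq natrM -expr2.
  by rewrite [X in X ^+ 2]natr_Zp sq_z.
have [] // := Fp_euler_sign m_neq0; move/(Fp_euler_criterion m_neq0) in nsq.
by move=> sq_m; case: nsq.
Qed.

Lemma legendre_signE (m k : nat) : ~~ (p %| m)%N ->
  (m%:R : F) ^+ p./2 = (-1) ^+ k -> legendre m p = (-1) ^+ k.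
Proof.
move=> pNm mk; apply: Fp_intr_sign_inj; first exact: legendre_sign.
  by rewrite -signr_odd; case: (odd k); [right|left].
by rewrite legendre_Fp // mk rmorphXn /= rmorphN1.
Qed.

Lemma legendreM (a b : nat) : legendre (a * b) p = legendre a p * legendre b p.
Proof.
have [pa|pNa] := boolP (p %| a)%N; first by rewrite /legendre pa dvdn_mulr // mul0r.
have [pb|pNb] := boolP (p %| b)%N; first by rewrite /legendre pb dvdn_mull // mulr0.
have pNab : ~~ (p %| a * b)%N by rewrite Euclid_dvdM // negb_or pNa.
apply: Fp_intr_sign_inj.
- exact: legendre_sign.
- by case: (legendre_sign pNa) => ->; case: (legendre_sign pNb) => ->;
    rewrite ?mulr1 ?mulN1r ?opprK; [left|right|right|left].
- by rewrite intrM !legendre_Fp // natrM exprMn.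
Qed.

Lemma legendre1 : legendre 1 p = 1.
Proof.
have pN1 : ~~ (p %| 1)%N by rewrite dvdn1; have := prime_gt1 p_prime; lia.
by rewrite (legendre_signE (k := 0) pN1) // expr1n.
Qed.

Lemma legendre_pred : legendre p.-1 p = (-1) ^+ p./2.
Proof.
have pNpred : ~~ (p %| p.-1)%N.
  by apply/negP => /dvdn_leq; have := prime_gt1 p_prime; lia.
apply: legendre_signE => //; congr (_ ^+ _); apply/eqP.
by rewrite -addr_eq0 natr1 prednK ?prime_gt0 // pchar_Fp_0.
Qed.

End QuadraticResidues.

Section GaussLemma.
Variables p m : nat.
Hypotheses (p_prime : prime p) (p_odd : odd p) (pNm : ~~ (p %| m)%N).
Local Notation F := 'F_p.

Let p_half : (p./2).*2.+1 = p. Proof. exact: odd_halfK. Qed.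

Definition abs_residue (k : nat) : nat :=
  if (m * k %% p <= p./2)%N then m * k %% p else p - m * k %% p.

Definition gauss_count : nat := \sum_(1 <= k < p./2.+1) (p./2 < m * k %% p)%N.

Lemma mul_mod_range (k : nat) : (0 < k <= p./2)%N -> (0 < m * k %% p < p)%N.
Proof.
move=> /andP[k_gt0 k_le]; apply/andP; split; last by rewrite ltn_pmod ?prime_gt0.
rewrite lt0n -/(dvdn p (m * k)) Euclid_dvdM // negb_or pNm /=.
by apply/negP => /(dvdn_leq k_gt0); have := p_half; lia.
Qed.

Lemma abs_residue_range (k : nat) :
  (0 < k <= p./2)%N -> (0 < abs_residue k <= p./2)%N.
Proof.
move=> /mul_mod_range; have := p_half; rewrite /abs_residue.
by case: (leqP (m * k %% p) p./2); lia.
Qed.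

Lemma abs_residue_inj (k j : nat) : (0 < k <= p./2)%N -> (0 < j <= p./2)%N ->
  abs_residue k = abs_residue j -> k = j.
Proof.
have p_m : coprime p m by rewrite prime_coprime.
have mod_inj k' j' : (0 < k' <= p./2)%N -> (0 < j' <= p./2)%N ->
    m * k' %% p = m * j' %% p -> k' = j'.
  wlog jk : k' j' / (j' <= k')%N.
    by move=> W hk hj e; case: (leqP j' k') => [|/ltnW] jk; [|symmetry]; apply: W.
  move=> hk hj /eqP; rewrite eqn_mod_dvd ?leq_mul2l ?jk ?orbT // -mulnBr Gauss_dvdr //.
  by have [e _|/dvdn_leq le] := posnP (k' - j'); [lia|move/le; have := p_half; lia].
move=> hk hj; have mod_sum : m * k %% p + m * j %% p <> p.
  move=> e; have : (p %| m * (k + j))%N.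
    by rewrite /dvdn mulnDr -modnDm e modnn.
  by rewrite Gauss_dvdr // => /dvdn_leq; have := p_half; lia.
have := mul_mod_range hk; have := mul_mod_range hj; have := p_half.
rewrite /abs_residue.
by case: (leqP (m * k %% p) p./2); case: (leqP (m * j %% p) p./2) => _ _ _ _ _ e;
  apply: mod_inj; lia.
Qed.

Lemma abs_residue_perm :
  perm_eq [seq abs_residue k | k <- index_iota 1 p./2.+1] (index_iota 1 p./2.+1).
Proof.
have uniq_res : uniq [seq abs_residue k | k <- index_iota 1 p./2.+1].
  rewrite map_inj_in_uniq ?iota_uniq // => k j.
  by rewrite !mem_index_iota => hk hj; apply: abs_residue_inj.
have sub_res : {subset [seq abs_residue k | k <- index_iota 1 p./2.+1]
                 <= index_iota 1 p./2.+1}.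
  move=> x /mapP[k]; rewrite !mem_index_iota => hk ->.
  by rewrite ltnS; apply: abs_residue_range.
apply: uniq_perm; rewrite ?iota_uniq //.
by have [] := uniq_min_size uniq_res sub_res; rewrite ?size_map.
Qed.

Lemma Fp_mul_abs_residue (k : nat) : (0 < k <= p./2)%N ->
  ((m * k)%N%:R = (-1) ^+ (p./2 < m * k %% p)%N * (abs_residue k)%:R :> F)%R.
Proof.
move=> /mul_mod_range; rewrite /abs_residue -(Fp_nat_mod p_prime (m * k)).
case: (leqP (m * k %% p) p./2) => [_ _|_ /andP[_ /ltnW lt_p]]; first by rewrite mul1r.
by rewrite mulN1r natrB // pchar_Fp_0 // sub0r opprK Fp_nat_mod.
Qed.

Lemma gauss_lemma : legendre m p = ((-1) ^+ gauss_count)%R.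
Proof.
apply: legendre_signE => //.
pose P := (\prod_(1 <= k < p./2.+1) (k%:R : F))%R.
have P_neq0 : (P != 0)%R.
  rewrite prodf_seq_neq0; apply/allP => k; rewrite mem_index_iota => hk /=.
  by rewrite Fp_nat_eq0 //; apply/negP => /dvdn_leq; have := p_half; lia.
apply: (mulIf P_neq0); transitivity (\prod_(1 <= k < p./2.+1) ((m * k)%N%:R : F))%R.
  rewrite [RHS](eq_bigr (fun k => m%:R * k%:R)%R) => [|k _]; last by rewrite natrM.
  by rewrite big_split /= prodr_const_nat subSS subn0.
under eq_big_nat => k hk do rewrite (Fp_mul_abs_residue hk).
rewrite big_split /= prodrXr.
by rewrite -(big_map abs_residue xpredT) (perm_big _ abs_residue_perm).
Qed.

(* Eisenstein: the residues [m * k %% p] above [p./2] are [p] minus the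
   absolute residues, which permute [1, ..., p./2]; summing
   [m * k = (m * k %/ p) * p + m * k %% p] and reducing modulo 2 leaves the
   parity of [gauss_count]. *)
Lemma gauss_count_odd : odd m ->
  odd gauss_count = odd (\sum_(1 <= k < p./2.+1) m * k %/ p).
Proof.
move=> m_odd.
set S := \sum_(1 <= k < p./2.+1) k.
set Q := \sum_(1 <= k < p./2.+1) m * k %/ p.
set R := \sum_(1 <= k < p./2.+1) m * k %% p.
set X := \sum_(1 <= k < p./2.+1) (p./2 < m * k %% p)%N * abs_residue k.
have sum_div : m * S = Q * p + R.
  rewrite /S big_distrr /= /Q big_distrl /= /R -big_split /=.
  by apply: eq_bigr => k _; rewrite -divn_eq.
have sum_res : \sum_(1 <= k < p./2.+1) abs_residue k = S.
  by rewrite -(big_map abs_residue xpredT (fun k => k)) (perm_big _ abs_residue_perm).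
have sum_mod : R + 2 * X = S + gauss_count * p.
  rewrite -sum_res /R /X /gauss_count big_distrr big_distrl -!big_split /=.
  apply: eq_big_nat => k /mul_mod_range; have := p_half; rewrite /abs_residue.
  by case: (leqP (m * k %% p) p./2) => /=; lia.
have := congr1 odd sum_div; have := congr1 odd sum_mod.
rewrite !oddD !oddM m_odd p_odd /=.
by case: (odd S); case: (odd Q); case: (odd R); case: (odd X); case: (odd _).
Qed.

End GaussLemma.

Lemma legendre_eisenstein (p m : nat) : prime p -> odd p -> ~~ (p %| m)%N -> odd m ->
  legendre m p = ((-1) ^+ (\sum_(1 <= k < p./2.+1) k * m %/ p))%R.
Proof.
move=> p_prime p_odd pNm m_odd.
rewrite gauss_lemma // -signr_odd gauss_count_odd // signr_odd.
by under eq_bigr do rewrite mulnC.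
Qed.

Lemma sum_nat_le_count (n N : nat) : \sum_(1 <= j < N.+1) (j <= n) = minn n N.
Proof.
elim: N => [|N IH]; first by rewrite big_nil; lia.
by rewrite big_nat_recr //= IH; case: (leqP N.+1 n); lia.
Qed.

(* Both sums count the lattice points of the rectangle [1, p./2] x [1, q./2],
   on either side of the diagonal [j * p = k * q], which contains none of them. *)
Lemma lattice_point_count (p q : nat) : odd p -> odd q -> coprime p q ->
  \sum_(1 <= k < p./2.+1) k * q %/ p + \sum_(1 <= j < q./2.+1) j * p %/ q
  = p./2 * q./2.
Proof.
move=> p_odd q_odd pq.
have p_half := odd_halfK p_odd; have q_half := odd_halfK q_odd.
have p_gt0 := odd_gt0 p_odd; have q_gt0 := odd_gt0 q_odd.
have count_k k : (0 < k < p./2.+1)%N ->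
    k * q %/ p = \sum_(1 <= j < q./2.+1) (j * p <= k * q).
  move=> hk; under eq_bigr do rewrite -leq_divRL //.
  rewrite sum_nat_le_count; apply/esym/minn_idPl; rewrite -ltnS ltn_divLR //; nia.
have count_j j : (0 < j < q./2.+1)%N ->
    j * p %/ q = \sum_(1 <= k < p./2.+1) (k * q <= j * p).
  move=> hj; under eq_bigr do rewrite -leq_divRL //.
  rewrite sum_nat_le_count; apply/esym/minn_idPl; rewrite -ltnS ltn_divLR //; nia.
rewrite (eq_big_nat _ _ count_k) (eq_big_nat _ _ count_j) [X in _ + X]exchange_big.
rewrite -big_split /=.
have -> : p./2 * q./2 = \sum_(1 <= k < p./2.+1) \sum_(1 <= j < q./2.+1) 1.
  by rewrite !sum_nat_const_nat !subn1 muln1 mulnC.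
apply: eq_big_nat => k hk; rewrite -big_split; apply: eq_big_nat => j hj /=.
have : j * p != k * q.
  apply/eqP => e; have : (p %| k * q)%N by rewrite -e dvdn_mull.
  by rewrite Gauss_dvdl // => /dvdn_leq; lia.
by case: (ltngtP (j * p) (k * q)).
Qed.

Theorem quadratic_reciprocity (p q : nat) :
  prime p -> prime q -> odd p -> odd q -> p != q ->
  (legendre q p * legendre p q = (-1) ^+ (p./2 * q./2))%R.
Proof.
move=> p_prime q_prime p_odd q_odd p_neq_q.
have pNq : ~~ (p %| q)%N by rewrite dvdn_prime2.
have qNp : ~~ (q %| p)%N by rewrite dvdn_prime2 // eq_sym.
have pq : coprime p q by rewrite prime_coprime.
by rewrite !legendre_eisenstein // -exprD lattice_point_count.
Qed.

(** * Jacobi symbols *)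

Section JacobiSymbol.
Local Open Scope ring_scope.

Definition jacobi_int (m n : nat) : int :=
  \prod_(p <- primes n) legendre m p ^+ logn p n.

Lemma jacobi_oddE (m n : nat) : odd n -> jacobi m n = JInt (jacobi_int m n).
Proof. by rewrite /jacobi => ->. Qed.

Lemma jacobi_int_prime (m p : nat) : prime p -> jacobi_int m p = legendre m p.
Proof. by move=> pp; rewrite /jacobi_int primes_prime // big_seq1 logn_prime // eqxx. Qed.

Lemma jacobi_int_n1 (m : nat) : jacobi_int m 1 = 1.
Proof. by rewrite /jacobi_int big_nil. Qed.

Lemma jacobi_int_mod (m n : nat) : (0 < n)%N -> jacobi_int (m %% n) n = jacobi_int m n.
Proof.
move=> n_gt0; apply: eq_big_seq => p; rewrite mem_primes => /and3P[_ _ pn].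
by rewrite /legendre /dvdn -!(modn_dvdm m pn).
Qed.

Lemma jacobi_int_primes_le (m n N : nat) : (0 < n < N)%N ->
  jacobi_int m n = \prod_(0 <= p < N | prime p) legendre m p ^+ logn p n.
Proof.
move=> /andP[n_gt0 n_lt].
transitivity (\prod_(0 <= p < N | p \in primes n) legendre m p ^+ logn p n).
  rewrite /jacobi_int -[RHS]big_filter; apply: perm_big; apply: uniq_perm.
  - exact: primes_uniq.
  - by rewrite filter_uniq // iota_uniq.
  move=> p; rewrite mem_filter mem_index_iota; case pn: (p \in primes n) => //=.
  by move: pn; rewrite mem_primes => /and3P[_ _ /dvdn_leq] /(_ n_gt0); lia.
rewrite big_mkcond [RHS]big_mkcond; apply: eq_bigr => p _.
case pn: (p \in primes n); first by move: pn; rewrite mem_primes => /andP[->].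
have -> : logn p n = 0%N by apply/eqP; rewrite -leqn0 leqNgt logn_gt0 pn.
by rewrite expr0; case: (prime p).
Qed.

Lemma jacobi_intMr (m a b : nat) : (0 < a)%N -> (0 < b)%N ->
  jacobi_int m (a * b) = jacobi_int m a * jacobi_int m b.
Proof.
move=> a_gt0 b_gt0; have ab_gt0 : (0 < a * b)%N by rewrite muln_gt0 a_gt0.
rewrite !(@jacobi_int_primes_le _ _ (a * b).+1) ?ab_gt0 ?a_gt0 ?b_gt0 ?ltnS ?leq_pmulr
  ?leq_pmull ?leqnn //.
by rewrite -big_split; apply: eq_bigr => p _; rewrite lognM // exprD.
Qed.

Lemma primes_odd (n p : nat) : odd n -> p \in primes n -> odd p.
Proof.
move=> n_odd; rewrite mem_primes => /and3P[pp _ pn].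
by case/even_prime: pp pn => // ->; rewrite dvdn2 n_odd.
Qed.

Lemma jacobi_intMl (a b n : nat) : odd n ->
  jacobi_int (a * b) n = jacobi_int a n * jacobi_int b n.
Proof.
move=> n_odd; rewrite /jacobi_int -big_split; apply: eq_big_seq => p pn /=.
have p_odd := primes_odd n_odd pn; have := pn; rewrite mem_primes => /andP[pp _].
by rewrite legendreM // exprMn.
Qed.

Lemma jacobi_int_1n (n : nat) : odd n -> jacobi_int 1 n = 1.
Proof.
move=> n_odd; rewrite /jacobi_int big_seq big1 // => p pn.
have p_odd := primes_odd n_odd pn; have := pn; rewrite mem_primes => /andP[pp _].
by rewrite legendre1 // expr1n.
Qed.

Lemma odd_prime_ind (P : nat -> Prop) : P 1%N ->
  (forall p n, prime p -> odd p -> odd n -> P n -> P (p * n)%N) ->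
  forall n, odd n -> P n.
Proof.
move=> P1 PM; elim/ltn_ind => n IH n_odd.
have [n_le1|n_gt1] := leqP n 1; first by case: n n_le1 n_odd {IH} => [|[|]].
have n_eq : n = (pdiv n * (n %/ pdiv n))%N by rewrite mulnC divnK // pdiv_dvd.
have /andP[p_odd m_odd] : odd (pdiv n) && odd (n %/ pdiv n) by rewrite -oddM -n_eq.
rewrite n_eq; apply: PM (IH _ _ m_odd) => //; first exact: pdiv_prime.
by rewrite ltn_Pdiv ?prime_gt1 ?pdiv_prime ?odd_gt0.
Qed.

Lemma oddM_half (a b : nat) : odd a -> odd b ->
  odd (a * b)./2 = odd a./2 (+) odd b./2.
Proof.
move=> a_odd b_odd; have ab_odd : odd (a * b) by rewrite oddM a_odd.
have := odd_halfK ab_odd; have := odd_halfK a_odd; have := odd_halfK b_odd.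
have -> : (a * b)./2 = (2 * (a./2 * b./2) + a./2 + b./2)%N by nia.
by rewrite !oddD oddM /=; case: (odd a./2); case: (odd b./2).
Qed.

Lemma sign_mul_half (x a b : nat) : odd a -> odd b ->
  (-1) ^+ (x * (a * b)./2) = (-1) ^+ (x * a./2) * (-1) ^+ (x * b./2) :> int.
Proof.
move=> a_odd b_odd; rewrite -!(signr_odd _ (_ * _)%N) !oddM oddM_half //.
by rewrite andb_addr signr_addb.
Qed.

Lemma jacobi_reciprocity_prime (p m : nat) : prime p -> odd p -> odd m ->
  ~~ (p %| m)%N -> legendre m p * jacobi_int p m = (-1) ^+ (p./2 * m./2).
Proof.
move=> pp p_odd; move: m; apply: odd_prime_ind.
  by rewrite legendre1 // jacobi_int_n1 muln0 mulr1.
move=> q n qp q_odd n_odd IH pNqn.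
have pNq : ~~ (p %| q)%N by apply: contra pNqn => /dvdn_mulr.
have pNn : ~~ (p %| n)%N by apply: contra pNqn => /dvdn_mull.
have p_neq_q : p != q by apply: contra pNq => /eqP ->.
rewrite legendreM // jacobi_intMr ?(prime_gt0 qp) ?(odd_gt0 n_odd) //.
rewrite (jacobi_int_prime p qp) sign_mul_half // -(IH pNn).
by rewrite -(quadratic_reciprocity pp qp p_odd q_odd p_neq_q); ring.
Qed.

Theorem jacobi_reciprocity (m n : nat) : odd m -> odd n -> coprime m n ->
  jacobi_int m n * jacobi_int n m = (-1) ^+ (m./2 * n./2).
Proof.
move=> m_odd; move: n; apply: odd_prime_ind.
  by rewrite jacobi_int_n1 jacobi_int_1n // muln0 mulr1.
move=> p n pp p_odd n_odd IH; rewrite coprimeMr => /andP[mp mn].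
rewrite jacobi_intMr ?(prime_gt0 pp) ?(odd_gt0 n_odd) //.
rewrite jacobi_intMl // jacobi_int_prime // sign_mul_half // -(IH mn).
rewrite [(m./2 * p./2)%N]mulnC -(jacobi_reciprocity_prime pp p_odd m_odd); last first.
  by rewrite -prime_coprime // coprime_sym.
by ring.
Qed.

Lemma jacobi_int_pred (n : nat) : odd n -> jacobi_int n.-1 n = (-1) ^+ n./2.
Proof.
move: n; apply: odd_prime_ind; first by rewrite jacobi_int_n1.
move=> p n pp p_odd n_odd IH.
have p_gt0 := prime_gt0 pp; have n_gt0 := odd_gt0 n_odd.
have pred_mod d e : (0 < d)%N -> (0 < e)%N -> ((d * e).-1 %% d = d.-1)%N.
  move=> d_gt0 e_gt0; have -> : (d * e).-1 = e.-1 * d + d.-1 by nia.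
  by rewrite modnMDl modn_small // prednK.
rewrite jacobi_intMr // jacobi_int_prime // -legendre_mod // pred_mod //.
rewrite legendre_pred // -jacobi_int_mod // mulnC pred_mod // IH.
by rewrite -[RHS]signr_odd oddM_half // signr_addb !signr_odd mulrC.
Qed.

End JacobiSymbol.

(** * Convergents *)

Section ConvergentArithmetic.
Variable a : nat -> nat.
Local Notation s := (cf_num a).
Local Notation t := (cf_den a).

Lemma cf_num0 : s 0 = a 0. Proof. by []. Qed.
Lemma cf_num1 : s 1 = a 1 * a 0 + 1. Proof. by []. Qed.
Lemma cf_numSS k : s k.+2 = a k.+2 * s k.+1 + s k. Proof. by []. Qed.
Lemma cf_den0 : t 0 = 1. Proof. by []. Qed.
Lemma cf_den1 : t 1 = a 1. Proof. by rewrite /cf_den /=; lia. Qed.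
Lemma cf_denSS k : t k.+2 = a k.+2 * t k.+1 + t k. Proof. by []. Qed.

Lemma cf_det k : ((s k.+1 * t k)%:Z - (s k * t k.+1)%:Z = (-1) ^+ k)%R.
Proof.
elim: k => [|k IH]; first by rewrite cf_num1 cf_num0 cf_den1 cf_den0 expr0; lia.
by rewrite cf_numSS cf_denSS exprS -IH; lia.
Qed.

Lemma cf_det_even k : ~~ odd k -> s k.+1 * t k = s k * t k.+1 + 1.
Proof. by move=> k_even; have := cf_det k; rewrite -signr_odd (negbTE k_even) expr0; lia. Qed.

Lemma cf_det_odd k : odd k -> s k * t k.+1 = s k.+1 * t k + 1.
Proof. by move=> k_odd; have := cf_det k; rewrite -signr_odd k_odd expr1; lia. Qed.

Lemma coprime_cf_den k : coprime (t k) (t k.+1).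
Proof.
rewrite /coprime -dvdn1; have g_t := dvdn_gcdl (t k) (t k.+1).
have g_tS := dvdn_gcdr (t k) (t k.+1).
have [k_odd|k_even] := boolP (odd k).
  by rewrite -(dvdn_addr _ (dvdn_mull (s k.+1) g_t)) -cf_det_odd // dvdn_mull.
by rewrite -(dvdn_addr _ (dvdn_mull (s k) g_tS)) -cf_det_even // dvdn_mull.
Qed.

Lemma cf_num_den_mod k :
  s k.+1 * t k = (if odd k then (t k.+1).-1 else 1) %[mod t k.+1].
Proof.
case: ifP => [k_odd|/negbT k_even]; last by rewrite cf_det_even // modnMDl.
have e := cf_det_odd k_odd; have : 0 < s k * t k.+1 by rewrite e addn1.
rewrite muln_gt0 => /andP[s_gt0 t_gt0].
have -> : s k.+1 * t k = (s k).-1 * t k.+1 + (t k.+1).-1.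
  by have := leq_pmull (t k.+1) s_gt0; rewrite -!subn1 mulnBl mul1n; lia.
by rewrite modnMDl.
Qed.

End ConvergentArithmetic.

Lemma cf_pair_ext (a b : nat -> nat) (init : nat * nat) (k : nat) :
  (forall i, i <= k -> a i = b i) -> cf_pair a init k = cf_pair b init k.
Proof. by elim: k => [//|k IH] ab /=; rewrite IH ?ab // => i ik; apply: ab; lia. Qed.

Lemma cf_num_ext (a b : nat -> nat) (k : nat) :
  (forall i, i <= k -> a i = b i) -> cf_num a k = cf_num b k.
Proof. by move=> ab; rewrite /cf_num ab // (cf_pair_ext _ ab). Qed.

Lemma cf_den_ext (a b : nat -> nat) (k : nat) :
  (forall i, i <= k -> a i = b i) -> cf_den a k = cf_den b k.
Proof. by move=> ab; rewrite /cf_den (cf_pair_ext _ ab). Qed.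

(* The partial quotients [1; 1, 4, d_0, 4, d_1, 4, ...] with [d_j = 2] if
   [c j] and [d_j = 4] otherwise. *)
Definition cf_of_bits (c : nat -> bool) (n : nat) : nat :=
  match n with
  | 0 | 1 => 1
  | n.+2 => if odd n && c n./2 then 2 else 4
  end.

Section CfOfBits.
Variable c : nat -> bool.
Local Notation a := (cf_of_bits c).
Local Notation s := (cf_num (cf_of_bits c)).
Local Notation t := (cf_den (cf_of_bits c)).

Lemma cf_of_bits_range i : 1 <= a i <= 4.
Proof. by case: i => [|[|i]] //=; case: ifP. Qed.

Lemma cf_of_bits_gt0 i : 0 < a i.
Proof. by case/andP: (cf_of_bits_range i). Qed.

Lemma cf_of_bits_bit j : a j.*2.+3 = if c j then 2 else 4.
Proof. by rewrite /= odd_double /= uphalf_double. Qed.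

Lemma cf_of_bits_even k : ~~ odd k -> a k.+2 = 4.
Proof. by move=> /negbTE /= ->. Qed.

Lemma odd_cf_of_bitsSS k : odd (a k.+2) = false.
Proof. by rewrite /=; case: ifP. Qed.

Lemma cf_of_bits_eq2 n : a n = 2 -> exists2 j, n = j.*2.+3 & c j.
Proof.
case: n => [|[|i]] //=; case: ifP => // /andP[i_odd cj] _.
by exists i./2 => //; rewrite -[in LHS](odd_double_half i) i_odd.
Qed.

Lemma odd_cf_den k : odd (t k).
Proof.
elim/ltn_ind: k => -[|[|k]] IH //.
by rewrite cf_denSS oddD oddM odd_cf_of_bitsSS /= IH.
Qed.

Lemma cf_den_even_mod4 k : ~~ odd k -> t k = 1 %[mod 4].
Proof.
elim/ltn_ind: k => -[|[|k]] IH //; rewrite /= negbK => k_even.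
by rewrite cf_denSS cf_of_bits_even // mulnC modnMDl IH.
Qed.

Lemma half_cf_den_even k : ~~ odd k -> ~~ odd (t k)./2.
Proof.
move=> k_even; have := odd_halfK (odd_cf_den k); have := cf_den_even_mod4 k_even.
by rewrite -dvdn2 /dvdn; move: (t k) => T; lia.
Qed.

Lemma jacobi_int_cf_den k : jacobi_int (t k) (t k.+1) = 1%R.
Proof.
elim: k => [|k IH]; first by rewrite cf_den1 jacobi_int_n1.
have := jacobi_reciprocity (odd_cf_den k.+1) (odd_cf_den k.+2) (coprime_cf_den _ k.+1).
have -> : ((-1) ^+ ((t k.+1)./2 * (t k.+2)./2) = 1 :> int)%R.
  rewrite -signr_odd oddM; have [k_odd|k_even] := boolP (odd k).
    by rewrite (negbTE (half_cf_den_even (k := k.+1) _)) //= negbK.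
  by rewrite (negbTE (half_cf_den_even (k := k.+2) _)) ?andbF //= negbK.
rewrite -(jacobi_int_mod (t k.+2) (odd_gt0 (odd_cf_den k.+1))) cf_denSS modnMDl.
by rewrite jacobi_int_mod ?odd_gt0 ?odd_cf_den // IH mulr1.
Qed.

Lemma jacobi_seq_cf_of_bits k : jacobi_seq a k = JInt 1.
Proof.
rewrite /jacobi_seq jacobi_oddE ?odd_cf_den //; congr JInt.
case: k => [|k]; first exact: jacobi_int_n1.
have t_gt0 := odd_gt0 (odd_cf_den k.+1).
have := jacobi_intMl (s k.+1) (t k) (odd_cf_den k.+1).
rewrite jacobi_int_cf_den mulr1 => <-; rewrite -jacobi_int_mod // cf_num_den_mod.
rewrite jacobi_int_mod //; case: ifP => [k_odd|_]; last exact/jacobi_int_1n/odd_cf_den.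
rewrite jacobi_int_pred ?odd_cf_den // -signr_odd.
by rewrite (negbTE (half_cf_den_even _)) //= negbK.
Qed.

End CfOfBits.

Section ConvergentsReal.
Variables (R : realType) (a : nat -> nat).
Hypothesis a_gt0 : forall i, (0 < i)%N -> (0 < a i)%N.
Local Notation s := (cf_num a).
Local Notation t := (cf_den a).
Local Open Scope ring_scope.
Local Open Scope classical_set_scope.

Lemma cf_den_gt0 k : (0 < t k)%N.
Proof.
elim/ltn_ind: k => -[|[|k]] IH //; first by rewrite cf_den1 a_gt0.
by rewrite cf_denSS addn_gt0 IH ?orbT.
Qed.

Lemma cf_den_ge k : (k <= t k)%N.
Proof.
elim/ltn_ind: k => -[|[|k]] IH //; first by rewrite cf_den1 a_gt0.
have := IH k.+1 (ltnSn _); have := cf_den_gt0 k; have := a_gt0 (ltn0Sn k.+1).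
by rewrite cf_denSS; nia.
Qed.

Lemma cf_den_ltSS k : (t k < t k.+2)%N.
Proof.
have := cf_den_gt0 k.+1; have := a_gt0 (ltn0Sn k.+1).
by rewrite cf_denSS; nia.
Qed.

Definition cf_conv k : R := (s k)%:R / (t k)%:R.

Lemma cf_conv_diff k :
  cf_conv k.+1 - cf_conv k = (-1) ^+ k / (t k * t k.+1)%:R.
Proof.
have t_neq0 j : (t j)%:R != 0 :> R by rewrite pnatr_eq0 -lt0n cf_den_gt0.
have /(congr1 (intr : int -> R)) := cf_det a k.
rewrite intrB -!pmulrn rmorphXn rmorphN1 /= !natrM => <-.
move: (t_neq0 k) (t_neq0 k.+1); rewrite /cf_conv.
by move: (t k)%:R (t k.+1)%:R => T T' T_neq0 T'_neq0; field; rewrite T_neq0 T'_neq0.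
Qed.

Lemma cf_gap_lt k : (t k.+1 * t k.+2)%:R^-1 < (t k * t k.+1)%:R^-1 :> R.
Proof.
rewrite ltf_pV2 ?posrE ?ltr0n ?muln_gt0 ?cf_den_gt0 // ltr_nat mulnC ltn_pmul2l //.
  exact: cf_den_ltSS.
exact: cf_den_gt0.
Qed.

Lemma cf_conv_even_lt k : ~~ odd k -> cf_conv k < cf_conv k.+2.
Proof.
move=> k_even; have := cf_conv_diff k; have := cf_conv_diff k.+1.
have := cf_gap_lt k; rewrite exprS -signr_odd (negbTE k_even) expr0; lra.
Qed.

Lemma cf_conv_odd_gt k : odd k -> cf_conv k.+2 < cf_conv k.
Proof.
move=> k_odd; have := cf_conv_diff k; have := cf_conv_diff k.+1.
have := cf_gap_lt k; rewrite exprS -signr_odd k_odd expr1; lra.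
Qed.

Lemma cf_conv_even_le m n : (m <= n)%N -> cf_conv m.*2 <= cf_conv n.*2.
Proof.
move=> /subnK <-; elim: (n - m)%N => [|d IH]; first by rewrite add0n.
apply: (le_trans IH); rewrite addSn doubleS.
by apply/ltW/cf_conv_even_lt; rewrite odd_double.
Qed.

Lemma cf_conv_odd_ge m n : (m <= n)%N -> cf_conv n.*2.+1 <= cf_conv m.*2.+1.
Proof.
move=> /subnK <-; elim: (n - m)%N => [|d IH]; first by rewrite add0n.
apply: le_trans IH; rewrite addSn doubleS.
by apply/ltW/cf_conv_odd_gt; rewrite /= odd_double.
Qed.

Lemma cf_conv_even_lt_odd m n : cf_conv m.*2 < cf_conv n.*2.+1.
Proof.
apply: (le_lt_trans (cf_conv_even_le (leq_maxl m n))).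
apply: (lt_le_trans _ (cf_conv_odd_ge (leq_maxr m n))).
rewrite -subr_gt0 cf_conv_diff -signr_odd odd_double expr0 divr_gt0 //.
by rewrite ltr0n muln_gt0 !cf_den_gt0.
Qed.

Definition cf_value : R := sup (range (fun n => cf_conv n.*2)).

Lemma cf_conv_even_le_value n : cf_conv n.*2 <= cf_value.
Proof.
apply: sup_upper_bound; last by exists n.
split; first by exists (cf_conv 0), 0%N.
by exists (cf_conv 1) => _ [m _ <-]; apply/ltW/(cf_conv_even_lt_odd m 0).
Qed.

Lemma cf_value_le_conv_odd n : cf_value <= cf_conv n.*2.+1.
Proof.
apply: ge_sup; first by exists (cf_conv 0), 0%N.
by move=> _ [m _ <-]; apply/ltW/cf_conv_even_lt_odd.
Qed.

Lemma cf_value_between k : if odd k then cf_conv k.+1 <= cf_value < cf_conv k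
                           else cf_conv k < cf_value <= cf_conv k.+1.
Proof.
rewrite -[in cf_conv k.+1](odd_double_half k) -[in cf_conv k](odd_double_half k).
case: (odd k); rewrite ?add0n ?add1n.
  rewrite -doubleS cf_conv_even_le_value /=.
  apply: le_lt_trans (cf_conv_odd_gt _); last by rewrite /= odd_double.
  by rewrite -doubleS cf_value_le_conv_odd.
rewrite cf_value_le_conv_odd andbT.
apply: lt_le_trans (cf_conv_even_lt _) _; first by rewrite odd_double.
by rewrite -doubleS cf_conv_even_le_value.
Qed.

Lemma cf_value_neq_conv k : cf_value != cf_conv k.
Proof.
have := cf_value_between k; case: (odd k) => /andP[lo hi].
  by rewrite lt_eqF.
by rewrite gt_eqF.
Qed.

Lemma cf_value_dist k : `|cf_value - cf_conv k| <= (t k * t k.+1)%:R^-1.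
Proof.
have := cf_value_between k; have := cf_conv_diff k.
rewrite -signr_odd ler_norml; case: (odd k) => [|] diff /andP[lo hi]; lra.
Qed.

Lemma cf_gap_le k : (t k * t k.+1)%:R^-1 <= k.+1%:R^-1 :> R.
Proof.
rewrite lef_pV2 ?posrE ?ltr0n ?muln_gt0 ?cf_den_gt0 // ler_nat.
by have := cf_den_ge k.+1; have := cf_den_gt0 k; nia.
Qed.

Lemma cf_conv_cvg : cf_conv @ \oo --> cf_value.
Proof.
apply/cvgrPdist_lt => e e_gt0.
apply: filterS (near_infty_natSinv_lt (PosNum e_gt0)) => k /= k_e.
exact: le_lt_trans (cf_value_dist k) (le_lt_trans (cf_gap_le k) k_e).
Qed.

Lemma cf_value_gt0 : 0 < cf_value.
Proof.
have := cf_value_between 0; rewrite /cf_conv cf_den0 divr1 /= => /andP[+ _].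
exact/le_lt_trans.
Qed.

(* If [x = z / b] then [z * t_b - b * s_b] is an integer of absolute value
   [b * t_b * |x - s_b / t_b| <= b / t_(b+1) < 1], hence [0]: [x] would be a
   convergent. *)
Lemma cf_value_irrational : irrational cf_value.
Proof.
move=> /rationalP [z [b x_eq]].
have b_neq0 : b%:R != 0 :> R.
  by apply: contraTneq cf_value_gt0 => b0; rewrite x_eq b0 invr0 mulr0 ltxx.
have t_neq0 j : (t j)%:R != 0 :> R by rewrite pnatr_eq0 -lt0n cf_den_gt0.
pose N : int := z * (t b)%:Z - (b * s b)%:Z.
have N_eq : N%:~R = (cf_value - cf_conv b) * b%:R * (t b)%:R :> R.
  rewrite /N intrB intrM -!pmulrn natrM x_eq /cf_conv.
  by move: (t_neq0 b); move: (t b)%:R => T T_neq0; field; rewrite b_neq0 T_neq0.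
have N_small : `|N%:~R| < 1 :> R.
  rewrite N_eq !normrM !normr_nat.
  apply: le_lt_trans (ler_wpM2r (ler0n _ _) (ler_wpM2r (ler0n _ _) (cf_value_dist b))) _.
  have -> : (t b * t b.+1)%:R^-1 * b%:R * (t b)%:R = b%:R / (t b.+1)%:R :> R.
    rewrite natrM; move: (t_neq0 b) (t_neq0 b.+1).
    by move: (t b)%:R (t b.+1)%:R => T T' T0 T'0; field; rewrite T0 T'0.
  rewrite ltr_pdivrMr ?ltr0n ?cf_den_gt0 // mul1r ltr_nat.
  exact: cf_den_ge.
have N0 : N = 0.
  move: N_small; rewrite -intr_norm -[1 : R]/(1%:~R) ltr_int => N_lt1.
  by apply/eqP; rewrite -normr_eq0; lia.
move: N_eq; rewrite N0 => /esym/eqP; rewrite !mulf_eq0 subr_eq0.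
by rewrite (negbTE (cf_value_neq_conv b)) (negbTE b_neq0) (negbTE (t_neq0 b)).
Qed.

Lemma cf_expansion_value : cf_expansion cf_value a.
Proof. by split; [exact: a_gt0 | exact: cf_conv_cvg]. Qed.

End ConvergentsReal.

(** * Separation, periods and counting *)

Lemma cf_of_bits_agree (c1 c2 : nat -> bool) (j0 : nat) :
  (forall j, j < j0 -> c1 j = c2 j) ->
  forall i, i <= j0.*2.+2 -> cf_of_bits c1 i = cf_of_bits c2 i.
Proof.
move=> agree [|[|i]] // i_le /=; case: (boolP (odd i)) => //= i_odd.
by rewrite agree //; have := odd_double_half i; rewrite i_odd; lia.
Qed.

(* [4 s_(k+1) + s_k] over [4 t_(k+1) + t_k] against
   [4 (2 s_(k+1) + s_k) + s_(k+1)] over [4 (2 t_(k+1) + t_k) + t_(k+1)]: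
   cross-multiplying leaves [7 (s_k t_(k+1) - s_(k+1) t_k) = 7]. *)
Lemma cf_tail_4_lt_2_4 (R : realFieldType) (S S' T T' : nat) :
  S' * T = S * T' + 1 -> 0 < T -> 0 < T' ->
  ((4 * S + S')%:R / (4 * T + T')%:R
   < (4 * (2 * S + S') + S)%:R / (4 * (2 * T + T') + T)%:R :> R)%R.
Proof.
move=> det T_gt0 T'_gt0.
rewrite ltr_pdivrMr ?ltr0n ?addn_gt0 ?muln_gt0 ?T_gt0 // mulrAC.
rewrite ltr_pdivlMr ?ltr0n ?addn_gt0 ?muln_gt0 ?T_gt0 // -!natrM ltr_nat.
nia.
Qed.

Lemma cf_value_of_bits_lt (R : realType) (c1 c2 : nat -> bool) (j0 : nat) :
  (forall j, j < j0 -> c1 j = c2 j) -> c1 j0 -> ~~ c2 j0 ->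
  (cf_value R (cf_of_bits c2) < cf_value R (cf_of_bits c1))%R.
Proof.
move=> agree c1_j0 /negbTE c2_j0.
have a1_gt0 i (_ : 0 < i) := cf_of_bits_gt0 c1 i.
have a2_gt0 i (_ : 0 < i) := cf_of_bits_gt0 c2 i.
apply: (le_lt_trans (cf_value_le_conv_odd R a2_gt0 j0.+1)).
apply: (lt_le_trans _ (cf_conv_even_le_value R a1_gt0 j0.+2)).
set k := j0.*2.+1.
have agree_k i : i <= k.+1 -> cf_of_bits c1 i = cf_of_bits c2 i.
  by move=> i_le; apply: cf_of_bits_agree agree _ _; lia.
have a1_k2 : cf_of_bits c1 k.+2 = 2 by rewrite cf_of_bits_bit c1_j0.
have a2_k2 : cf_of_bits c2 k.+2 = 4 by rewrite cf_of_bits_bit c2_j0.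
have a1_k3 : cf_of_bits c1 k.+3 = 4 by rewrite cf_of_bits_even // /k /= odd_double.
have s_eq i : i <= k.+1 -> cf_num (cf_of_bits c2) i = cf_num (cf_of_bits c1) i.
  by move=> i_le; apply/esym/cf_num_ext => l l_le; apply: agree_k; lia.
have t_eq i : i <= k.+1 -> cf_den (cf_of_bits c2) i = cf_den (cf_of_bits c1) i.
  by move=> i_le; apply/esym/cf_den_ext => l l_le; apply: agree_k; lia.
rewrite /cf_conv !doubleS -/k (cf_numSS _ k.+1) (cf_denSS _ k.+1).
rewrite !(cf_numSS _ k) !(cf_denSS _ k) a1_k2 a2_k2 a1_k3 !s_eq // !t_eq //.
apply: cf_tail_4_lt_2_4; rewrite ?(cf_den_gt0 a1_gt0) //.
by apply: cf_det_odd; rewrite /k /= odd_double.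
Qed.

Lemma cf_value_of_bits_inj (R : realType) :
  injective (fun c => cf_value R (cf_of_bits c)).
Proof.
move=> c1 c2 /= x_eq; apply/funext => j; apply/eqP/contraT => c12.
have [j0 c12_j0 min_j0] := ex_minnP (ex_intro (fun j => c1 j != c2 j) j c12).
have agree i : i < j0 -> c1 i = c2 i.
  by move=> lt; apply/eqP; apply: contraTT lt => /min_j0; rewrite -leqNgt.
move: c12_j0; case c1j: (c1 j0); case c2j: (c2 j0) => // _.
  by have := cf_value_of_bits_lt R agree c1j (negbT c2j); rewrite x_eq ltxx.
have agree' i (lt : i < j0) := esym (agree i lt).
by have := cf_value_of_bits_lt R agree' c2j (negbT c1j); rewrite x_eq ltxx.
Qed.

Lemma cf_value_of_bits_spec (R : realType) (c : nat -> bool) :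
  let x := cf_value R (cf_of_bits c) in
  [/\ irrational x, cf_expansion x (cf_of_bits c), four_digits (cf_of_bits c)
    & forall k, jacobi_seq (cf_of_bits c) k = JInt 1].
Proof.
have a_gt0 i (_ : 0 < i) := cf_of_bits_gt0 c i.
split; [exact: cf_value_irrational | exact: cf_expansion_value |
        exact: cf_of_bits_range | exact: jacobi_seq_cf_of_bits].
Qed.

Definition multiple_bits (m j : nat) : bool := m.+1 %| j.

Lemma eventually_periodic_withP (a : nat -> nat) (p : nat) :
  eventually_periodic_with a p <-> exists N, forall n, N <= n -> a (n + p) = a n.
Proof. by []. Qed.

Lemma eventually_periodic_multiple_bits (m : nat) :
  eventually_periodic_with (cf_of_bits (multiple_bits m)) (m.+1).*2.
Proof.
apply/eventually_periodic_withP; exists 2 => -[|[|i]] // _.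
rewrite !addSn /= oddD odd_double addbF halfD.
by rewrite odd_double andbF add0n doubleK /multiple_bits dvdn_addl.
Qed.

Lemma multiple_bits_period_min (m q : nat) : 0 < q ->
  eventually_periodic_with (cf_of_bits (multiple_bits m)) q -> (m.+1).*2 <= q.
Proof.
move=> q_gt0 /eventually_periodic_withP[N per]; set J := N * m.+1.
have cJ : multiple_bits m J by rewrite /multiple_bits dvdn_mull.
have JN : N <= J by rewrite /J leq_pmulr.
have := per J.*2.+3; rewrite cf_of_bits_bit cJ => /(_ _)/cf_of_bits_eq2[|J' J'_eq cJ'].
  by rewrite -addnn; lia.
have J_lt : J < J' by move: J'_eq; rewrite -!addnn; lia.
have := dvdn_leq (_ : 0 < J' - J) (dvdn_sub cJ' cJ).
by move: J'_eq; rewrite -!addnn; lia.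
Qed.

Lemma period_length_multiple_bits (m : nat) :
  period_length (cf_of_bits (multiple_bits m)) (m.+1).*2.
Proof.
split; first by rewrite double_gt0.
by split; [exact: eventually_periodic_multiple_bits | exact: multiple_bits_period_min].
Qed.

Definition is_square (j : nat) : bool := [exists r : 'I_j.+1, r * r == j].

Lemma is_squareP (j : nat) : reflect (exists r, r * r = j) (is_square j).
Proof.
apply: (iffP existsP) => [[r /eqP sq]|[r sq]]; first by exists r.
have r_lt : r < j.+1 by rewrite ltnS -sq; case: r {sq} => // r; rewrite leq_pmulr.
by exists (Ordinal r_lt); rewrite sq.
Qed.

(* [s * s] is a square but [s * s + p] is not, as long as [p <= 2 * s]. *)
Lemma squares_not_periodic (p N : nat) : 0 < p ->
  exists2 j, N <= j & is_square (j + p) != is_square j.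
Proof.
move=> p_gt0; set s := N + p; exists (s * s); first by rewrite /s; nia.
have -> : is_square (s * s) by apply/is_squareP; exists s.
suff : ~~ is_square (s * s + p) by case: is_square.
apply/negP => /is_squareP[r sq_r].
have s_lt_r : s < r by rewrite ltnNge; apply/negP => r_le; have := leq_mul r_le r_le; lia.
by have := leq_mul s_lt_r s_lt_r; rewrite /s; nia.
Qed.

Lemma eventually_periodic_withM (a : nat -> nat) (p k : nat) :
  eventually_periodic_with a p -> eventually_periodic_with a (k * p).
Proof.
move=> /eventually_periodic_withP[N per]; apply/eventually_periodic_withP.
exists N => n n_ge; elim: k => [|k IH]; first by rewrite addn0.
by rewrite mulSn addnCA addnC per ?IH // (leq_trans n_ge) ?leq_addr.
Qed.

Definition interleave_bits (b : nat -> bool) (j : nat) : bool :=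
  if odd j then is_square j./2 else b j./2.

Lemma interleave_bits_odd (b : nat -> bool) (j : nat) :
  interleave_bits b j.*2.+1 = is_square j.
Proof. by rewrite /interleave_bits /= odd_double /= uphalf_double. Qed.

Lemma interleave_bits_inj : injective interleave_bits.
Proof.
move=> b1 b2 b12; apply/funext => j; have := congr1 (fun b => b j.*2) b12.
by rewrite /interleave_bits odd_double doubleK.
Qed.

Lemma cf_of_interleave_bits_aperiodic (b : nat -> bool) :
  ~ eventually_periodic (cf_of_bits (interleave_bits b)).
Proof.
move=> [p [p_gt0 /(eventually_periodic_withM 4)/eventually_periodic_withP[N per]]].
have [j j_ge sq_j] := squares_not_periodic N p_gt0.
have shift : (j.*2.+1).*2.+3 + 4 * p = ((j + p).*2.+1).*2.+3 by rewrite -!addnn; lia.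
have := per (j.*2.+1).*2.+3; rewrite shift !cf_of_bits_bit !interleave_bits_odd.
have N_le : N <= (j.*2.+1).*2.+3 by rewrite -!addnn; lia.
by move=> /(_ N_le); move: sq_j; case: is_square; case: is_square.
Qed.

Lemma no_injection_bits_nat (F : (nat -> bool) -> nat) : ~ injective F.
Proof.
move=> F_inj; pose d n := ~~ `[< exists b, F b = n /\ b n >].
have [d_Fd|nd_Fd] := boolP (d (F d)).
  by move: (d_Fd) => /negP; apply; apply/asboolP; exists d.
move: (nd_Fd) => /negbNE/asboolP[b [/F_inj -> d_Fd]].
by rewrite d_Fd in nd_Fd.
Qed.

Local Open Scope classical_set_scope.
Local Open Scope ring_scope.

Theorem theorem3 (R : realType) :
  (forall C : R, 0 < C ->
     exists (x : R) (a : nat -> nat),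
       irrational x /\ cf_expansion x a /\ four_digits a /\
       (exists p : nat, period_length a p /\ C <= p%:R) /\
       (forall k, jacobi_seq a k = JInt 1)) /\
  ~ countable [set x : R | irrational x /\
       exists a : nat -> nat, cf_expansion x a /\ four_digits a /\
         ~ eventually_periodic a /\ (forall k, jacobi_seq a k = JInt 1)].
Proof.
set S := (X in ~ countable X); split=> [C C_gt0 | /countable_injP[f f_inj]].
  pose c := multiple_bits (Num.truncn C).
  have [x_irr x_cf digits jac] := cf_value_of_bits_spec R c.
  exists (cf_value R (cf_of_bits c)), (cf_of_bits c); do !split => //.
  exists (Num.truncn C).+1.*2; split; first exact: period_length_multiple_bits.
  by apply/ltW/(lt_le_trans (truncnS_gt C)); rewrite ler_nat -addnn leq_addr.
apply: (@no_injection_bits_nat (fun b => f (cf_value R (cf_of_bits (interleave_bits b))))).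
have mem b : cf_value R (cf_of_bits (interleave_bits b)) \in S.
  have [x_irr x_cf digits jac] := cf_value_of_bits_spec R (interleave_bits b).
  by rewrite inE; split=> //; exists (cf_of_bits (interleave_bits b));
    do !split => //; apply: cf_of_interleave_bits_aperiodic.
by move=> b1 b2 /(f_inj _ _ (mem b1) (mem b2))/cf_value_of_bits_inj/interleave_bits_inj.
Qed.
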